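(* $\mathfrak{L}(V)=\mathfrak{L}^-(V)$ if and only if $p_{ii}^2=1$ for all $i$ and $p_{ij}=p_{ji}=1$ for all $1\le i\neq j\le n$. In this case $\mathfrak{L}(V)=\mathfrak{L}^-(V)=V$.
   Context: $V$ is a braided vector space of diagonal type over an algebraically closed field $F$ of characteristic $0$ with basis $x_1,\dots,x_n$, braiding $C(x_i\otimes x_j)=q_{ij}x_j\otimes x_i$, Nichols algebra $\mathfrak{B}(V)$ ($\mathbb{Z}^n$-graded, $\deg x_i=e_i$); $\chi(e_i,e_j)=q_{ij}$, $p_{ij}:=q_{ij}$, $p_{uv}:=\chi(\deg u,\deg v)$. For homogeneous $x,y$, $[x,y]:=yx-p_{yx}xy$; $\mathfrak{L}(V)$ is the linear span in $\mathfrak{B}(V)$ of all iterated brackets $[\,,\,]$ (any bracketing) of $x_1,\dots,x_n$. The Nichols Lie algebra $\mathfrak{L}^-(V)$ is the Lie subalgebra of $\mathfrak{B}(V)$ generated by $V$ under the commutator $[a,b]^-=ab-ba$ (i.e. the span of all iterated commutators of $x_1,\dots,x_n$). *)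

From HB Require Import structures.
From mathcomp Require Import all_boot all_order all_algebra all_fingroup.
Set Implicit Arguments. Unset Strict Implicit. Unset Printing Implicit Defensive.
Import GRing.Theory.
Local Open Scope ring_scope.

(* Tensor algebra T(V) of V = F x_1 + ... + F x_n (basis indexed by 'I_n):
   an element is given by its coefficient on each word (seq 'I_n);
   the word [:: i1; ...; im] stands for x_{i1} ... x_{im}.  (Functions of
   arbitrary support = completion of T(V); all elements actually built below
   have finite support, and everything is defined coefficientwise.) *)
Definition tv (n : nat) (F : Type) := seq 'I_n -> F.

Section TensorAlg.
Variables (F : fieldType) (n : nat).

Definition tgen (i : 'I_n) : tv n F := fun w => (w == [:: i])%:R.

Definition tadd (f g : tv n F) : tv n F := fun w => f w + g w.
Definition tscale (c : F) (f : tv n F) : tv n F := fun w => c * f w.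
Definition tsub (f g : tv n F) : tv n F := fun w => f w - g w.
Definition tmul (f g : tv n F) : tv n F :=
  fun w => \sum_(k < (size w).+1) f (take k w) * g (drop k w).

Variable q : 'I_n -> 'I_n -> F.  (* braiding matrix, c(x_i (x) x_j) = q i j x_j (x) x_i *)

(* chi(deg u, deg v) for u, v with multisets of letters s, t *)
Definition chi (s t : seq 'I_n) : F := \prod_(i <- s) \prod_(j <- t) q i j.

(* Quantum symmetrizer Omega = sum_{sigma in S_m} T_sigma on degree m,
   T_sigma the Matsumoto lift of sigma to the braid group acting via c.
   For a word w, T_sigma(w) = (prod_{a<b, sigma a > sigma b} q w_a w_b) * v
   where v_(sigma a) = w_a. *)
Definition Omega (f : tv n F) : tv n F :=
  fun v =>
    let t := in_tuple v in
    \sum_(s : 'S_(size v))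
      let wl := fun a : 'I_(size v) => tnth t (s a) in
      (\prod_(a : 'I_(size v)) \prod_(b : 'I_(size v) | (a < b)%N && (s b < s a)%N)
          q (wl a) (wl b))
      * f [seq wl a | a <- enum 'I_(size v)].

(* The Nichols algebra B(V) = T(V)/ker Omega.  Two elements of T(V) have the
   same image in B(V) iff their Omega's agree. *)
Definition Beq (f g : tv n F) : Prop := forall w, Omega f w = Omega g w.

Definition tspan (P : tv n F -> Prop) (f : tv n F) : Prop :=
  exists m (c : 'I_m -> F) (g : 'I_m -> tv n F),
    (forall k, P (g k)) /\ forall w, f w = \sum_(k < m) c k * g k w.

(* image in B(V) of the span of P, as a predicate on representatives *)
Definition Bspan (P : tv n F -> Prop) (f : tv n F) : Prop :=
  exists g, tspan P g /\ Beq f g.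

Definition Bspan_eq (P1 P2 : tv n F -> Prop) : Prop :=
  forall f, Bspan P1 f <-> Bspan P2 f.

(* bracketings: binary trees with leaves the generators *)
Inductive btree := BLeaf of 'I_n | BNode of btree & btree.

Fixpoint leaves (t : btree) : seq 'I_n :=
  match t with BLeaf i => [:: i] | BNode a b => leaves a ++ leaves b end.

(* [x, y] = y x - p_{yx} x y, p_{yx} = chi(deg y, deg x) *)
Fixpoint ev_br (t : btree) : tv n F :=
  match t with
  | BLeaf i => tgen i
  | BNode a b =>
      tsub (tmul (ev_br b) (ev_br a))
           (tscale (chi (leaves b) (leaves a)) (tmul (ev_br a) (ev_br b)))
  end.

Fixpoint ev_comm (t : btree) : tv n F :=
  match t with
  | BLeaf i => tgen i
  | BNode a b => tsub (tmul (ev_comm a) (ev_comm b)) (tmul (ev_comm b) (ev_comm a))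
  end.

Definition is_br (f : tv n F) : Prop := exists t, f = ev_br t.
Definition is_comm (f : tv n F) : Prop := exists t, f = ev_comm t.
Definition is_gen (f : tv n F) : Prop := exists i, f = tgen i.

Definition LV := Bspan is_br.
Definition LmV := Bspan is_comm.
Definition VB := Bspan is_gen.

Definition Bsub_eq (A B : tv n F -> Prop) : Prop := forall f, A f <-> B f.

End TensorAlg.

From HB Require Import structures.
From mathcomp Require Import all_boot all_order all_algebra all_fingroup.
From mathcomp Require Import zify ring.
Set Implicit Arguments. Unset Strict Implicit. Unset Printing Implicit Defensive.
Import GRing.Theory.
Local Open Scope ring_scope.

(* In degree two the symmetrizer sends [x_a x_b] to [x_a x_b + q_ba x_b x_a],
   while every combination of commutators has antisymmetric coefficients.
   Comparing the brackets [x_i, x_i] and [x_j, x_i] with such combinations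
   gives [q_ii^2 = 1] and ([q_ij q_ji = 1] or [q_ij = 1]), hence [q_ij q_ji = 1]
   by symmetry; then every bracket is killed by the symmetrizer in degree
   [x_i x_j], so the commutator [x_i, x_j]^- must be too, i.e. [q_ji = 1].
   Conversely, under these conditions the symmetrizer kills every bracket and
   every commutator of degree at least two, so both L(V) and L^-(V) reduce to V.
   On a word containing a letter [i] with [q_ii = -1] twice, transposing two
   consecutive occurrences of [i] is a sign-reversing involution on the terms
   of the symmetrizer.  On the other words every braiding coefficient is 1, so
   the symmetrizer is the plain sum over all rearrangements, which is invariant
   under rotation; hence [ab] and [ba] have the same image, and a bracket
   survives only if its two halves share a letter [i] with [q_ii <> 1], which
   cannot occur twice in the word. *)

Section Symmetrizer.
Variables (F : fieldType) (n : nat) (q : 'I_n -> 'I_n -> F).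

Definition braid_coef (v : seq 'I_n) (s : 'S_(size v)) : F :=
  \prod_(a : 'I_(size v)) \prod_(b : 'I_(size v) | (a < b)%N && (s b < s a)%N)
    q (tnth (in_tuple v) (s a)) (tnth (in_tuple v) (s b)).

Definition perm_word (v : seq 'I_n) (s : 'S_(size v)) : seq 'I_n :=
  [seq tnth (in_tuple v) (s a) | a <- enum 'I_(size v)].

Arguments braid_coef : clear implicits.
Arguments perm_word : clear implicits.

Lemma OmegaE (f : tv n F) v :
  Omega q f v = \sum_(s : 'S_(size v)) braid_coef v s * f (perm_word v s).
Proof. by []. Qed.

Lemma eq_Omega (f g : tv n F) :
  (forall w, f w = g w) -> forall v, Omega q f v = Omega q g v.
Proof. by move=> fg v; rewrite !OmegaE; apply: eq_bigr => s _; rewrite fg. Qed.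

Lemma Omega_lincomb m (c : 'I_m -> F) (h : 'I_m -> tv n F) (g : tv n F) :
  (forall w, g w = \sum_(k < m) c k * h k w) ->
  forall v, Omega q g v = \sum_(k < m) c k * Omega q (h k) v.
Proof.
move=> gE v; rewrite OmegaE.
under eq_bigr do rewrite gE mulr_sumr.
rewrite exchange_big; apply: eq_bigr => k _.
by rewrite OmegaE mulr_sumr; apply: eq_bigr => s _; rewrite mulrCA.
Qed.

Lemma Omega_tspan_eq0 (P : tv n F -> Prop) g v :
  (forall f, P f -> Omega q f v = 0) -> tspan P g -> Omega q g v = 0.
Proof.
move=> P0 [m [c [h [Ph gE]]]]; rewrite (Omega_lincomb gE).
by apply: big1 => k _; rewrite P0 ?mulr0.
Qed.

Lemma Omega_eq0 (f : tv n F) : (forall w, f w = 0) -> forall v, Omega q f v = 0.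
Proof. by move=> f0 v; rewrite OmegaE big1 // => s _; rewrite f0 mulr0. Qed.

Definition homog (l : seq 'I_n) (f : tv n F) := forall w, ~~ perm_eq w l -> f w = 0.

Lemma homog_tgen i : homog [:: i] (tgen F i).
Proof. by move=> w; rewrite /tgen; case: eqP => // ->; rewrite perm_refl. Qed.

Lemma homog_tmul l1 l2 f g : homog l1 f -> homog l2 g -> homog (l1 ++ l2) (tmul f g).
Proof.
move=> hf hg w w_l; apply: big1 => k _.
case P1: (perm_eq (take k w) l1); last by rewrite hf ?P1 // mul0r.
case P2: (perm_eq (drop k w) l2); last by rewrite hg ?P2 // mulr0.
by rewrite -[w](cat_take_drop k) (perm_cat P1 P2) in w_l.
Qed.

Lemma homog_tmulC l1 l2 f g : homog l1 f -> homog l2 g -> homog (l2 ++ l1) (tmul f g).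
Proof.
move=> hf hg w w_l; apply: (homog_tmul hf hg).
by apply: contra w_l => /perm_trans; apply; rewrite perm_catC.
Qed.

Lemma homog_tsub l f g : homog l f -> homog l g -> homog l (tsub f g).
Proof. by move=> hf hg w w_l; rewrite /tsub hf // hg // subr0. Qed.

Lemma homog_tscale l c f : homog l f -> homog l (tscale c f).
Proof. by move=> hf w w_l; rewrite /tscale hf // mulr0. Qed.

Lemma homog_ev_br t : homog (leaves t) (ev_br q t).
Proof.
elim: t => [i|a ha b hb] /=; first exact: homog_tgen.
by apply: homog_tsub; [apply: homog_tmulC | apply/homog_tscale/homog_tmul].
Qed.

Lemma homog_ev_comm t : homog (leaves t) (ev_comm F t).
Proof.
elim: t => [i|a ha b hb] /=; first exact: homog_tgen.
by apply: homog_tsub; [apply: homog_tmul | apply: homog_tmulC].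
Qed.

Lemma size_leaves_gt0 (t : btree n) : (0 < size (leaves t))%N.
Proof. by elim: t => //= a ha b _; rewrite size_cat addn_gt0 ha. Qed.

Lemma size_leaves_eq2 (t : btree n) :
  size (leaves t) = 2%N -> exists a b, t = BNode (BLeaf a) (BLeaf b).
Proof.
case: t => [//|[a|a1 a2] [b|b1 b2]] /=; first by exists a, b.
all: rewrite !size_cat /= => sz; exfalso.
all: try have := size_leaves_gt0 a1; try have := size_leaves_gt0 a2.
all: try have := size_leaves_gt0 b1; try have := size_leaves_gt0 b2.
all: lia.
Qed.

Lemma tspan_sub (P P' : tv n F -> Prop) g :
  (forall f, P f -> P' f) -> tspan P g -> tspan P' g.
Proof. by move=> PP' [m [c [h [Ph gE]]]]; exists m, c, h; split=> // k; apply: PP'. Qed.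

Lemma Bspan_self (P : tv n F -> Prop) f : P f -> Bspan q P f.
Proof.
move=> Pf; exists f; split=> //; exists 1%N, (fun=> 1), (fun=> f).
by split=> // w; rewrite big_ord1 mul1r.
Qed.

Definition deg1 (f : tv n F) : tv n F := fun w => if size w == 1%N then f w else 0.

Lemma tspan_deg1 f : tspan (@is_gen F n) (deg1 f).
Proof.
exists n, (fun i => f [:: i]), (@tgen F n); split=> [i | w]; first by exists i.
rewrite /deg1 /tgen; case: w => [|j [|k w]] /=.
- by rewrite big1 // => i _; rewrite mulr0.
- rewrite (bigD1 j) //= eqxx mulr1 big1 ?addr0 // => i ij.
  by rewrite eqseq_cons andbT eq_sym (negbTE ij) mulr0.
- by rewrite big1 // => i _; rewrite eqseq_cons andbF mulr0.
Qed.

Lemma deg1_lincomb m (c : 'I_m -> F) (h : 'I_m -> tv n F) (g : tv n F) :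
  (forall w, g w = \sum_(k < m) c k * h k w) ->
  forall w, deg1 g w = \sum_(k < m) c k * deg1 (h k) w.
Proof.
move=> gE w; rewrite /deg1; case: ifP => _ //.
by rewrite big1 // => k _; rewrite mulr0.
Qed.

Lemma Bspan_eq_VB (P : tv n F -> Prop) :
  (forall i, P (tgen F i)) ->
  (forall f, P f -> forall v, Omega q f v = Omega q (deg1 f) v) ->
  Bsub_eq (Bspan q P) (VB q).
Proof.
move=> P_tgen P_deg1 f; split.
- case=> g [[m [c [h [Ph gE]]]] fg]; exists (deg1 g); split; first exact: tspan_deg1.
  move=> v; rewrite fg (Omega_lincomb gE) (Omega_lincomb (deg1_lincomb gE)).
  by apply: eq_bigr => k _; rewrite P_deg1.
- case=> g [g_gen fg]; exists g; split=> //.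
  by apply: tspan_sub g_gen => _ [i ->]; apply: P_tgen.
Qed.

Lemma Bspan_trees_eq_VB (ev : btree n -> tv n F) :
  (forall i, ev (BLeaf i) = tgen F i) -> (forall t, homog (leaves t) (ev t)) ->
  (forall a b v, Omega q (ev (BNode a b)) v = 0) ->
  Bsub_eq (Bspan q (fun f => exists t, f = ev t)) (VB q).
Proof.
move=> ev_leaf ev_homog ev_node; apply: Bspan_eq_VB => [i | _ [[i | a b] ->] v].
- by exists (BLeaf i).
- apply: eq_Omega => w; rewrite ev_leaf /deg1 /tgen.
  by case: ifP => // /eqP size_w; case: eqP => // w_i; rewrite w_i in size_w.
- rewrite ev_node Omega_eq0 // => w; rewrite /deg1; case: ifP => // /eqP size_w.
  apply: ev_homog; apply/negP => /perm_size; rewrite size_w /= size_cat.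
  by have := size_leaves_gt0 a; have := size_leaves_gt0 b; lia.
Qed.

End Symmetrizer.

Arguments braid_coef {F n} q v s.
Arguments perm_word {n} v s.

Section DegreeTwo.
Variables (F : fieldType) (n : nat) (q : 'I_n -> 'I_n -> F).

Lemma ord2P (x : 'I_2) : x = ord0 \/ x = ord_max.
Proof. by case: x => [[|[|m]] lt_m2]; [left|right|]; try apply: val_inj. Qed.

Lemma perm2P (s : 'S_2) : s = 1%g \/ s = tperm ord0 ord_max.
Proof.
have s01 : s ord0 != s ord_max by rewrite (inj_eq perm_inj).
case: (ord2P (s ord0)) => s0; case: (ord2P (s ord_max)) => s1;
  rewrite s0 s1 // in s01; [left|right]; apply/permP => x;
  by case: (ord2P x) => ->; rewrite ?perm1 ?tpermL ?tpermR.
Qed.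

Lemma Omega_pair (f : tv n F) a b :
  Omega q f [:: a; b] = f [:: a; b] + q b a * f [:: b; a].
Proof.
have swap_neq1 : tperm ord0 ord_max != 1%g :> 'S_2.
  by apply/eqP => /permP /(_ ord0); rewrite perm1 tpermL.
rewrite OmegaE (bigD1 1%g) //= (bigD1 (tperm ord0 ord_max)) //=.
rewrite big1 ?addr0; last first.
  move=> s /andP[/negPf s1 /negPf s2].
  by case: (perm2P s) => s_eq; rewrite s_eq eqxx in s1 s2.
have lift00 : lift ord0 ord0 = ord_max :> 'I_2 by apply: val_inj.
have -> : braid_coef q [:: a; b] 1 = 1.
  apply: big1 => x _; apply: big_pred0 => y; rewrite !perm1.
  by apply/negbTE/negP => /andP[] /ltn_trans xz /xz; rewrite ltnn.
have -> : braid_coef q [:: a; b] (tperm ord0 ord_max) = q b a.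
  rewrite /braid_coef !big_ord_recl !big_ord0 lift00 tpermL tpermR /=.
  rewrite !big_mkcond /= !big_ord_recl !big_ord0 /= lift00 ?tpermL ?tpermR /=.
  by rewrite big1 ?mul1r ?mulr1 // => y /andP[]; case: (ord2P y) => ->.
rewrite /perm_word !enum_ordSl enum_ord0 /= lift00 !perm1 tpermL tpermR /=.
by rewrite mul1r.
Qed.

Lemma tmul_tgen_pair (a b x y : 'I_n) :
  tmul (tgen F a) (tgen F b) [:: x; y] = ((x == a) && (y == b))%:R.
Proof.
rewrite /tmul /= !big_ord_recl big_ord0 /= /tgen /= !eqseq_cons /= !andbT.
by rewrite !mul0r !mulr0 add0r !addr0 -natrM mulnb.
Qed.

Lemma ev_br_pair (a b x y : 'I_n) :
  ev_br q (BNode (BLeaf a) (BLeaf b)) [:: x; y] =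
  ((x == b) && (y == a))%:R - q b a * ((x == a) && (y == b))%:R.
Proof. by rewrite /= /tsub /tscale !tmul_tgen_pair /chi !big_seq1. Qed.

Lemma ev_comm_pair (a b x y : 'I_n) :
  ev_comm F (BNode (BLeaf a) (BLeaf b)) [:: x; y] =
  ((x == a) && (y == b))%:R - ((x == b) && (y == a))%:R.
Proof. by rewrite /= /tsub !tmul_tgen_pair. Qed.

Lemma perm_eq_pairC (x y : 'I_n) l : perm_eq [:: x; y] l = perm_eq [:: y; x] l.
Proof. exact: (perm_catC [:: x] [:: y] l). Qed.

Lemma ev_comm_pair_anti (t : btree n) x y :
  ev_comm F t [:: x; y] = - ev_comm F t [:: y; x].
Proof.
case xy_t: (perm_eq [:: x; y] (leaves t)); last first.
  by rewrite !homog_ev_comm ?oppr0 ?(perm_eq_pairC y x) ?xy_t.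
have [a [b ->]] := size_leaves_eq2 (esym (perm_size xy_t)).
by rewrite !ev_comm_pair opprB [(x == a) && _]andbC [(x == b) && _]andbC.
Qed.

Lemma tspan_comm_pair_anti g x y :
  tspan (@is_comm F n) g -> g [:: x; y] = - g [:: y; x].
Proof.
case=> m [c [h [hc gE]]]; rewrite !gE -sumrN; apply: eq_bigr => k _.
by case: (hc k) => t ->; rewrite ev_comm_pair_anti mulrN.
Qed.

Lemma ev_comm_pair_diag (t : btree n) x : ev_comm F t [:: x; x] = 0.
Proof.
case xx_t: (perm_eq [:: x; x] (leaves t)); last by rewrite homog_ev_comm ?xx_t.
have [a [b ->]] := size_leaves_eq2 (esym (perm_size xx_t)).
by rewrite ev_comm_pair andbC subrr.
Qed.

Lemma tspan_comm_pair_diag g x : tspan (@is_comm F n) g -> g [:: x; x] = 0.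
Proof.
case=> m [c [h [hc gE]]]; rewrite gE; apply: big1 => k _.
by case: (hc k) => t ->; rewrite ev_comm_pair_diag mulr0.
Qed.

Lemma Omega_ev_br_pair (t : btree n) x y :
  q x y * q y x = 1 -> Omega q (ev_br q t) [:: x; y] = 0.
Proof.
move=> qxy1; rewrite Omega_pair.
case xy_t: (perm_eq [:: x; y] (leaves t)); last first.
  by rewrite !homog_ev_br ?mulr0 ?addr0 ?(perm_eq_pairC y x) ?xy_t.
have [a [b ->]] := size_leaves_eq2 (esym (perm_size xy_t)).
rewrite !ev_br_pair [(y == b) && _]andbC [(y == a) && _]andbC.
have t1 : ((x == b) && (y == a))%:R * (1 - q y x * q b a) = 0.
  case: andP => [[/eqP xb /eqP ya]|_]; rewrite ?mul0r //.
  by rewrite -xb -ya [q y x * _]mulrC qxy1 subrr mulr0.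
have t2 : ((x == a) && (y == b))%:R * (q y x - q b a) = 0.
  by case: andP => [[/eqP xa /eqP yb]|_]; rewrite ?mul0r // -xa -yb subrr mulr0.
by rewrite -[RHS](addr0 0) -[X in _ = X + _]t1 -t2; ring.
Qed.

Section Necessity.
Hypothesis LV_LmV : Bsub_eq (LV q) (LmV q).

Lemma sqr_diag_eq1 i : q i i ^+ 2 = 1.
Proof.
have [g [g_comm Omega_g]] :=
  (LV_LmV _).1 (Bspan_self q (ex_intro _ (BNode (BLeaf i) (BLeaf i)) erefl)).
move: (Omega_g [:: i; i]).
rewrite !Omega_pair ev_br_pair (tspan_comm_pair_diag i g_comm) eqxx /= mulr0 addr0.
by move=> E; apply/esym/subr0_eq; rewrite -[RHS]E; ring.
Qed.

Lemma offdiag_cases i j : i != j -> q i j * q j i = 1 \/ q i j = 1.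
Proof.
move=> ij; have ji : j != i by rewrite eq_sym.
have [g [g_comm Omega_g]] :=
  (LV_LmV _).1 (Bspan_self q (ex_intro _ (BNode (BLeaf j) (BLeaf i)) erefl)).
move: (Omega_g [:: i; j]) (Omega_g [:: j; i]).
rewrite !Omega_pair !ev_br_pair (tspan_comm_pair_anti j i g_comm) !eqxx.
rewrite (negbTE ij) (negbTE ji) /=; set c := g [:: i; j].
rewrite !mulr0 !subr0 !mulr1 sub0r addNr !mulrN => Eij Eji.
have : c * (q i j - 1) = 0 by rewrite Eji; ring.
move/eqP; rewrite mulf_eq0 subr_eq0 => /orP[/eqP c0 | /eqP]; last by right.
by left; move/eqP: Eij; rewrite c0 mulr0 subr0 subr_eq0 mulrC eq_sym => /eqP.
Qed.

Lemma offdiag_prod_eq1 i j : i != j -> q i j * q j i = 1.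
Proof.
move=> ij; have ji : j != i by rewrite eq_sym.
case: (offdiag_cases ij) => // qij1.
case: (offdiag_cases ji) => [qji_qij | qji1]; first by rewrite mulrC.
by rewrite qij1 qji1 mulr1.
Qed.

Lemma offdiag_eq1 i j : i != j -> q j i = 1.
Proof.
move=> ij; have [h [h_br Omega_h]] :=
  (LV_LmV _).2 (Bspan_self q (ex_intro _ (BNode (BLeaf i) (BLeaf j)) erefl)).
move: (Omega_h [:: i; j]).
rewrite (Omega_tspan_eq0 _ h_br) => [|_ [t ->]]; last first.
  exact: Omega_ev_br_pair (offdiag_prod_eq1 ij).
rewrite Omega_pair !ev_comm_pair !eqxx (negbTE ij) eq_sym (negbTE ij) /= => E.
by apply/esym/subr0_eq; rewrite -[RHS]E; ring.
Qed.

End Necessity.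

End DegreeTwo.

Section Sufficiency.
Variables (F : fieldType) (n : nat) (q : 'I_n -> 'I_n -> F).
Hypothesis two_neq0 : 2%:R != 0 :> F.
Hypothesis sqr_diag : forall i, q i i ^+ 2 = 1.
Hypothesis offdiag : forall i j, i != j -> q i j = 1.

Lemma diag_eqN1 i : q i i != 1 -> q i i = -1.
Proof.
move=> qii1; have : (q i i - 1) * (q i i + 1) = 0.
  by rewrite -subr_sqr sqr_diag expr1n subrr.
by move/eqP; rewrite mulf_eq0 subr_eq0 (negbTE qii1) addr_eq0 => /eqP.
Qed.

Section Word.
Variable v : seq 'I_n.
Local Notation m := (size v).
Local Notation L z := (tnth (in_tuple v) z).

(* the factor of [braid_coef] contributed by the input positions [x], [y] *)
Definition pair_coef (s : 'S_m) (lt : rel 'I_m) (x y : 'I_m) : F :=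
  if (s^-1%g x < s^-1%g y)%N && lt x y then q (L x) (L y) else 1.

Lemma braid_coefE s :
  braid_coef q v s =
  \prod_(xy : 'I_m * 'I_m) pair_coef s (fun x y => y < x)%N xy.1 xy.2.
Proof.
rewrite /braid_coef; under eq_bigr do rewrite big_mkcond.
rewrite pair_big /=.
have s2_inj : injective (fun xy : 'I_m * 'I_m => (s xy.1, s xy.2)).
  by move=> [a b] [c d] /= [/perm_inj -> /perm_inj ->].
rewrite [RHS](reindex_inj s2_inj) /=; apply: eq_bigr => -[a b] _.
by rewrite /pair_coef /= !permK.
Qed.

Lemma count_mem_tnth i : count_mem i v = #|[pred x : 'I_m | L x == i]|.
Proof. by rewrite -sum1_count big_tnth -sum1_card; apply: eq_bigl. Qed.

Lemma perm_word_perm_eq s : perm_eq (perm_word v s) v.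
Proof.
apply: (@perm_trans _ [seq L x | x <- enum 'I_m]); last by rewrite map_tnth_enum.
rewrite /perm_word (map_comp (fun x => L x) s); apply: perm_map.
apply: uniq_perm; rewrite ?(map_inj_uniq perm_inj) ?enum_uniq //.
by move=> x; rewrite mem_enum -[x](permKV s) mem_map ?mem_enum //; apply: perm_inj.
Qed.

Section Swap.
Variables (p p' : 'I_m) (i : 'I_n).
Hypotheses (lt_pp' : (p < p')%N) (Lp : L p = i) (Lp' : L p' = i) (qii : q i i = -1).
Hypothesis no_i_between : forall z : 'I_m, (p < z < p')%N -> L z != i.
Local Notation t := (tperm p p').

Lemma L_tperm z : L (t z) = L z.
Proof. by case: tpermP => // ->; rewrite Lp Lp'. Qed.

Lemma ltn_outside_swap z : L z = i -> z != p -> z != p' ->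
  ((z < p) = (z < p'))%N /\ ((p < z) = (p' < z))%N.
Proof.
move=> Lz; rewrite -!(inj_eq val_inj) /= => zp zp'.
have : ~~ (p < z < p')%N by apply/negP => /no_i_between; rewrite Lz eqxx.
by lia.
Qed.

Lemma ltn_tperm x y : L x = L y -> (x, y) != (p, p') -> (x, y) != (p', p) ->
  (t y < t x)%N = (y < x)%N.
Proof.
rewrite !xpair_eqE.
case: tpermP => [->|->|yp yp']; case: tpermP => [->|->|xp xp'] //=;
  rewrite ?eqxx ?andbT ?ltnn // => Lxy _ _.
all: first [move: xp xp' | move: yp yp']; move=> /eqP zp /eqP zp'.
- by have [_ ->] := ltn_outside_swap (etrans Lxy Lp) zp zp'.
- by have [_ ->] := ltn_outside_swap (etrans Lxy Lp') zp zp'.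
- by have [-> _] := ltn_outside_swap (etrans (esym Lxy) Lp) zp zp'.
- by have [-> _] := ltn_outside_swap (etrans (esym Lxy) Lp') zp zp'.
Qed.

Lemma braid_coef_tperm s : braid_coef q v (s * t)%g = - braid_coef q v s.
Proof.
have t2_inj : injective (fun xy : 'I_m * 'I_m => (t xy.1, t xy.2)).
  by move=> [a b] [c d] /= [/perm_inj -> /perm_inj ->].
have -> : braid_coef q v (s * t)%g =
    \prod_(xy : 'I_m * 'I_m) pair_coef s (fun x y => t y < t x)%N xy.1 xy.2.
  rewrite braid_coefE (reindex_inj t2_inj); apply: eq_bigr => -[x y] _.
  by rewrite /pair_coef /= invMg tpermV !permM !tpermK !L_tperm.
rewrite braid_coefE.
have pp'_neq : (p', p) != (p, p').
  by apply/eqP => -[e _]; move: lt_pp'; rewrite e ltnn.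
rewrite (bigD1 (p, p')) //= (bigD1 (p', p)) //=.
rewrite [in RHS](bigD1 (p, p')) //= [in RHS](bigD1 (p', p)) //=.
rewrite (eq_bigr (fun xy => pair_coef s (fun x y => y < x)%N xy.1 xy.2)) =>
  [|[x y] /andP[xy_pp' xy_p'p]]; last first.
  rewrite /pair_coef /=.
  have [-> | qxy] := eqVneq (q (L x) (L y)) 1; first by case: ifP; case: ifP.
  have Lxy : L x = L y by apply/eqP; apply: contraNT qxy => /offdiag ->.
  by rewrite ltn_tperm.
rewrite /pair_coef /= tpermL tpermR Lp Lp' qii lt_pp' [(p' < p)%N]ltnNge (ltnW lt_pp').
rewrite /= !andbT !andbF.
case: ltngtP => [lt_s | lt_s | /val_inj /perm_inj eq_pp'].
- by rewrite mulN1r !mul1r.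
- by rewrite mulN1r !mul1r opprK.
- by move: lt_pp'; rewrite eq_pp' ltnn.
Qed.

Lemma perm_word_tperm s : perm_word v (s * t)%g = perm_word v s.
Proof. by apply: eq_map => a; rewrite permM L_tperm. Qed.

Lemma Omega_eq0_swap (f : tv n F) : Omega q f v = 0.
Proof.
rewrite OmegaE; set S := \sum_s _.
have S_opp : S = - S.
  rewrite {1}/S (reindex_inj (mulIg t)) /= -sumrN.
  by apply: eq_bigr => s _; rewrite braid_coef_tperm perm_word_tperm mulNr.
move/eqP: S_opp; rewrite -addr_eq0 -mulr2n -mulr_natl mulf_eq0 (negbTE two_neq0).
exact/eqP.
Qed.

End Swap.

Lemma Omega_eq0_repeat i (f : tv n F) :
  q i i != 1 -> (1 < count_mem i v)%N -> Omega q f v = 0.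
Proof.
move=> /diag_eqN1 qii; rewrite count_mem_tnth => /card_gt1P [x0 [y0 []]].
wlog lt_xy : x0 y0 / (x0 < y0)%N.
  move=> wlog_xy Lx Ly xy; case: (ltngtP x0 y0) => [lt_xy | lt_yx | /val_inj eq_xy].
  - exact: wlog_xy lt_xy Lx Ly xy.
  - by apply: (wlog_xy y0 x0 lt_yx Ly Lx); rewrite eq_sym.
  - by rewrite eq_xy eqxx in xy.
rewrite !inE => /eqP Lx /eqP Ly _.
have i_after_x : (x0 < y0)%N && (L y0 == i) by rewrite lt_xy Ly eqxx.
case: (@arg_minnP _ y0 (fun z : 'I_m => (x0 < z)%N && (L z == i)) val i_after_x)
  => p' /andP[lt_xp' /eqP Lp'] min_p'.
apply: (Omega_eq0_swap lt_xp' Lx Lp' qii) => z /andP[lt_xz lt_zp'].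
apply/negP => /eqP Lz; have := min_p' z.
by rewrite lt_xz Lz eqxx leqNgt lt_zp' => /(_ isT).
Qed.

Lemma tmul_perm_word (g h : tv n F) s :
  tmul g h (perm_word v s) =
  \sum_(k < m.+1) g (take k (perm_word v s)) * h (drop k (perm_word v s)).
Proof. by rewrite /tmul (perm_size (perm_word_perm_eq s)). Qed.

Lemma rot_perm_word k :
  exists r : 'S_m, forall s, perm_word v (r * s)%g = rot k (perm_word v s).
Proof.
have : perm_eq (rot k (enum 'I_m)) (ord_tuple m) by rewrite perm_rot.
case/tuple_permP => r r_rot; exists r => s.
have rot_enum : rot k (enum 'I_m) = map r (enum 'I_m).
  by rewrite r_rot /=; apply: eq_map => j; rewrite tnth_ord_tuple.
rewrite /perm_word -[RHS]map_rot rot_enum -[RHS]map_comp.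
by apply: eq_map => a; rewrite /= permM.
Qed.

(* Summing over all permutations makes the concatenation product commutative:
   the word split at [k] is, up to a rotation, the word split at [m - k]. *)
Lemma sum_tmulC (g h : tv n F) :
  \sum_(s : 'S_m) tmul g h (perm_word v s) =
  \sum_(s : 'S_m) tmul h g (perm_word v s).
Proof.
under eq_bigr do rewrite tmul_perm_word.
under [RHS]eq_bigr do rewrite tmul_perm_word.
rewrite exchange_big [RHS]exchange_big [RHS](reindex_inj rev_ord_inj) /=.
apply: eq_bigr => k _; have [r r_rot] := rot_perm_word k.
rewrite [RHS](reindex_inj (mulgI r)) /=; apply: eq_bigr => s _.
have le_km : (k <= m)%N by rewrite -ltnS.
have size_drop_k : size (drop k (perm_word v s)) = (m - k)%N.
  by rewrite size_drop (perm_size (perm_word_perm_eq s)).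
by rewrite r_rot /rot subSS take_size_cat // drop_size_cat // mulrC.
Qed.

Lemma sum_tmul_eq0 (g h : tv n F) la lb i :
  homog la g -> homog lb h -> i \in la -> i \in lb -> (count_mem i v <= 1)%N ->
  \sum_(s : 'S_m) tmul g h (perm_word v s) = 0.
Proof.
move=> hg hh i_la i_lb count_i; apply: big1 => s _; apply: big1 => k _.
set u := perm_word v s.
case la_u: (perm_eq (take k u) la); last by rewrite hg ?la_u // mul0r.
case lb_u: (perm_eq (drop k u) lb); last by rewrite hh ?lb_u // mulr0.
have : (1 < count_mem i u)%N.
  rewrite -[u](cat_take_drop k) count_cat -addn1 leq_add //.
    by rewrite -has_count has_pred1 (perm_mem la_u).
  by rewrite -has_count has_pred1 (perm_mem lb_u).
by move/seq.permP: (perm_word_perm_eq s) => ->; rewrite ltnNge count_i.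
Qed.

Section TrivialBraidingCoefs.
Hypothesis repeat_diag1 : forall i, (1 < count_mem i v)%N -> q i i = 1.

Lemma braid_coef_eq1 s : braid_coef q v s = 1.
Proof.
apply: big1 => a _; apply: big1 => b /andP[lt_ab _].
have sab : s a != s b by rewrite (inj_eq perm_inj) -(inj_eq val_inj) /= ltn_eqF.
have [Lab | /offdiag //] := eqVneq (L (s a)) (L (s b)).
rewrite -Lab; apply: repeat_diag1; rewrite count_mem_tnth.
by apply/card_gt1P; exists (s a), (s b); rewrite !inE Lab eqxx.
Qed.

Lemma Omega_no_repeat (f : tv n F) :
  Omega q f v = \sum_(s : 'S_m) f (perm_word v s).
Proof. by rewrite OmegaE; apply: eq_bigr => s _; rewrite braid_coef_eq1 mul1r. Qed.

Lemma Omega_ev_comm_node_no_repeat a b : Omega q (ev_comm F (BNode a b)) v = 0.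
Proof. by rewrite Omega_no_repeat /= /tsub sumrB sum_tmulC subrr. Qed.

Lemma Omega_ev_br_node_no_repeat a b : Omega q (ev_br q (BNode a b)) v = 0.
Proof.
rewrite Omega_no_repeat /= /tsub /tscale sumrB -mulr_sumr sum_tmulC.
have [chi1 | /allPn [i i_b /allPn [j j_a qij]]] :=
  boolP (all (fun i => all (fun j => q i j == 1) (leaves a)) (leaves b)).
  suff -> : chi q (leaves b) (leaves a) = 1 by rewrite mul1r subrr.
  rewrite /chi big_seq big1 // => i i_b; rewrite big_seq big1 // => j j_a.
  by apply/eqP; move/allP: chi1 => /(_ i i_b) /allP /(_ j j_a).
have ij : i = j by apply/eqP; apply: contraNT qij => /offdiag ->.
rewrite -{}ij in j_a qij.
have homog_a := @homog_ev_br _ _ q a; have homog_b := @homog_ev_br _ _ q b.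
rewrite (sum_tmul_eq0 homog_a homog_b j_a i_b) ?mulr0 ?subr0 //.
by rewrite leqNgt; apply: contra qij => /repeat_diag1 ->.
Qed.

End TrivialBraidingCoefs.

End Word.

Lemma repeat_diag_cases v :
  (exists2 i, q i i != 1 & (1 < count_mem i v)%N) \/
  (forall i, (1 < count_mem i v)%N -> q i i = 1).
Proof.
have [/existsP [i /andP[rep qii]] | no_rep] :=
  boolP [exists i, (1 < count_mem i v)%N && (q i i != 1)].
  by left; exists i.
right=> i rep; apply/eqP; move/existsPn: no_rep => /(_ i).
by rewrite rep negbK.
Qed.

Lemma Omega_ev_br_node a b v : Omega q (ev_br q (BNode a b)) v = 0.
Proof.
case: (repeat_diag_cases v) => [[i qii rep] | rep1].
  exact: Omega_eq0_repeat qii rep.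
exact: Omega_ev_br_node_no_repeat.
Qed.

Lemma Omega_ev_comm_node a b v : Omega q (ev_comm F (BNode a b)) v = 0.
Proof.
case: (repeat_diag_cases v) => [[i qii rep] | rep1].
  exact: Omega_eq0_repeat qii rep.
exact: Omega_ev_comm_node_no_repeat.
Qed.

Lemma LV_eq_VB : Bsub_eq (LV q) (VB q).
Proof.
apply: Bspan_trees_eq_VB => //; [exact: homog_ev_br | exact: Omega_ev_br_node].
Qed.

Lemma LmV_eq_VB : Bsub_eq (LmV q) (VB q).
Proof.
apply: Bspan_trees_eq_VB => //; [exact: homog_ev_comm | exact: Omega_ev_comm_node].
Qed.

End Sufficiency.

Theorem proposition6p3 (F : closedFieldType) (n : nat) (q : 'I_n -> 'I_n -> F)
  (hchar : [pchar F] =i pred0) (hq : forall i j, q i j != 0) :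
  (Bsub_eq (LV q) (LmV q) <->
     ((forall i, q i i ^+ 2 = 1) /\
      (forall i j, i != j -> q i j = 1 /\ q j i = 1)))
  /\
  (Bsub_eq (LV q) (LmV q) -> Bsub_eq (LV q) (VB q) /\ Bsub_eq (LmV q) (VB q)).
Proof.
have two_neq0 : 2%:R != 0 :> F by rewrite (pcharf0P F).1.
have necessary : Bsub_eq (LV q) (LmV q) ->
    (forall i, q i i ^+ 2 = 1) /\ (forall i j, i != j -> q i j = 1 /\ q j i = 1).
  move=> LV_LmV; split=> [i | i j ij]; first exact: sqr_diag_eq1.
  by split; apply: offdiag_eq1; rewrite // eq_sym.
have sufficient : (forall i, q i i ^+ 2 = 1) ->
    (forall i j, i != j -> q i j = 1 /\ q j i = 1) ->
    Bsub_eq (LV q) (VB q) /\ Bsub_eq (LmV q) (VB q).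
  move=> sqr offdiag; have offdiag1 i j : i != j -> q i j = 1 by case/offdiag.
  by split; [exact: LV_eq_VB | exact: LmV_eq_VB].
split=> [|/necessary[]]; last exact: sufficient.
split=> [|[sqr offdiag] f]; first exact: necessary.
by have [LV_V LmV_V] := sufficient sqr offdiag; rewrite (LV_V f) (LmV_V f).
Qed.
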